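(* Let $\mu,\mu'$ be Borel probability measures on a separable metric space $X$, $\nu,\nu'$ Borel probability measures on a separable metric space $Y$, and $F\in\mathcal F^2$. Then for every $\lambda>0$, $$\pi^{(\lambda)}(\mu\otimes\nu,\mu'\otimes\nu')\le\max\Big\{\pi^{(\lambda)}(\mu,\mu')+\pi^{(\lambda)}(\nu,\nu'),\ 2F\big(\pi^{(\lambda)}(\mu,\mu'),\pi^{(\lambda)}(\nu,\nu')\big)\Big\},$$ where the left-hand side is computed on $X\times Y$ with the metric $d_F$.
   Context: $\mathcal F^2$: continuous $F\colon[0,+\infty)^2\to[0,+\infty)$ such that for all metric spaces $d_F((x,y),(x',y')):=F(d_X(x,x'),d_Y(y,y'))$ is a metric on $X\times Y$. For $A$ in a metric space and $r>0$, $U_r(A)=\{x:d(x,A)<r\}$. The $\lambda$-Prokhorov distance $\pi^{(\lambda)}(\mu,\nu)$ between Borel probability measures is the infimum of $\varepsilon>0$ such that $\mu(U_\varepsilon(A))\ge\nu(A)-\lambda\varepsilon$ for every Borel set $A$. *)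

From Stdlib Require Import Reals ClassicalEpsilon.
Open Scope R_scope.

Definition is_metric {T : Type} (d : T -> T -> R) : Prop :=
  (forall x y, d x y = 0 <-> x = y) /\
  (forall x y, d x y = d y x) /\
  (forall x y z, d x z <= d x y + d y z).

Definition countable_set {T : Type} (D : T -> Prop) : Prop :=
  exists g : T -> nat, forall x y, D x -> D y -> g x = g y -> x = y.

Definition separable {T : Type} (d : T -> T -> R) : Prop :=
  exists D : T -> Prop, countable_set D /\
    (forall x eps, 0 < eps -> exists z, D z /\ d x z < eps).

Definition is_open {T : Type} (d : T -> T -> R) (O : T -> Prop) : Prop :=
  forall x, O x -> exists r, 0 < r /\ forall y, d x y < r -> O y.

Definition sigma_algebra {T : Type} (S : (T -> Prop) -> Prop) : Prop :=
  S (fun _ => True) /\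
  (forall A, S A -> S (fun x => ~ A x)) /\
  (forall A : nat -> T -> Prop, (forall n, S (A n)) -> S (fun x => exists n, A n x)).

Definition borel {T : Type} (d : T -> T -> R) (A : T -> Prop) : Prop :=
  forall S : (T -> Prop) -> Prop,
    sigma_algebra S -> (forall O, is_open d O -> S O) -> S A.

(** Borel probability measures (set functions, meaningful on Borel sets) *)
Definition borel_prob {T : Type} (d : T -> T -> R) (mu : (T -> Prop) -> R) : Prop :=
  mu (fun _ => True) = 1 /\
  (forall A, borel d A -> 0 <= mu A) /\
  (forall A : nat -> T -> Prop,
     (forall n, borel d (A n)) ->
     (forall m n x, m <> n -> A m x -> A n x -> False) ->
     Un_cv (fun N => sum_f_R0 (fun n => mu (A n)) N)
           (mu (fun x => exists n, A n x))).

Definition nbhd {T : Type} (d : T -> T -> R) (r : R) (A : T -> Prop) : T -> Prop :=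
  fun x => exists a, A a /\ d x a < r.

Definition prok_adm {T : Type} (d : T -> T -> R) (lam : R)
  (mu nu : (T -> Prop) -> R) (eps : R) : Prop :=
  0 < eps /\ forall A, borel d A -> mu (nbhd d eps A) >= nu A - lam * eps.

Definition is_inf (S : R -> Prop) (m : R) : Prop :=
  (forall x, S x -> m <= x) /\ (forall b, (forall x, S x -> b <= x) -> b <= m).

Definition prokhorov {T : Type} (d : T -> T -> R) (lam : R)
  (mu nu : (T -> Prop) -> R) : R :=
  epsilon (inhabits 0)
    (fun r => is_inf (prok_adm d lam mu nu) r).

Definition F2 (F : R -> R -> R) : Prop :=
  (forall a b, 0 <= a -> 0 <= b -> 0 <= F a b) /\
  (forall a b, 0 <= a -> 0 <= b -> forall eps, 0 < eps ->
     exists delta, 0 < delta /\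
       forall a' b', 0 <= a' -> 0 <= b' -> Rabs (a' - a) < delta ->
         Rabs (b' - b) < delta -> Rabs (F a' b' - F a b) < eps) /\
  (forall (T U : Type) (dT : T -> T -> R) (dU : U -> U -> R),
     is_metric dT -> is_metric dU ->
     is_metric (fun p q : T * U => F (dT (fst p) (fst q)) (dU (snd p) (snd q)))).

Definition dprod {T U : Type} (F : R -> R -> R) (dT : T -> T -> R) (dU : U -> U -> R)
  : T * U -> T * U -> R :=
  fun p q => F (dT (fst p) (fst q)) (dU (snd p) (snd q)).

Definition is_product_measure {T U : Type} (dT : T -> T -> R) (dU : U -> U -> R)
  (dTU : T * U -> T * U -> R)
  (mu : (T -> Prop) -> R) (nu : (U -> Prop) -> R) (P : (T * U -> Prop) -> R) : Prop :=
  borel_prob dTU P /\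
  forall A B, borel dT A -> borel dU B ->
    P (fun p => A (fst p) /\ B (snd p)) = mu A * nu B.

From Stdlib Require Import Reals Lra Lia List Classical ClassicalEpsilon
  FunctionalExtensionality PropExtensionality.
Open Scope R_scope.

(* Fix admissible radii [a] for (mu, mu') and [b] for (nu, nu').  Every open set of X * Y
   is an increasing union of finite unions E of rectangles A * B, and for such E a finite
   Fubini argument over the atoms generated by the A's and the B's, using admissibility
   first in Y and then in X, gives P'(E) <= P(E^{a,b}) + lam a + lam b, where E^{a,b}
   thickens each A by a and each B by b.  Since F need not be monotone, a point of E^{a,b}
   is only known to lie within 2 F(a, b) of E (triangle inequality of d_F on a product of
   three-point spaces).  Hence every rho > max(a + b, 2 F(a, b)) is admissible for (P, P'),
   and continuity of F lets a and b tend to the two Prokhorov distances. *)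

Lemma pred_ext {T : Type} (A B : T -> Prop) : (forall x, A x <-> B x) -> A = B.
Proof.
  intros H; apply functional_extensionality; intro x; apply propositional_extensionality; auto.
Qed.

Lemma borel_open {T : Type} (d : T -> T -> R) O : is_open d O -> borel d O.
Proof. intros H S _ HS; auto. Qed.

Lemma borel_full {T : Type} (d : T -> T -> R) : borel d (fun _ => True).
Proof. intros S HS _; apply HS. Qed.

Lemma borel_compl {T : Type} (d : T -> T -> R) A :
  borel d A -> borel d (fun x => ~ A x).
Proof. intros H S HS Ho; apply HS, H; assumption. Qed.

Lemma borel_countable_union {T : Type} (d : T -> T -> R) (A : nat -> T -> Prop) :
  (forall n, borel d (A n)) -> borel d (fun x => exists n, A n x).
Proof. intros H S HS Ho; apply HS; intro n; apply H; assumption. Qed.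

Lemma borel_empty {T : Type} (d : T -> T -> R) : borel d (fun _ => False).
Proof.
  replace (fun _ : T => False) with (fun x : T => ~ True) by (apply pred_ext; tauto).
  apply (borel_compl d (fun _ => True)), borel_full.
Qed.

Lemma borel_or {T : Type} (d : T -> T -> R) A B :
  borel d A -> borel d B -> borel d (fun x => A x \/ B x).
Proof.
  intros HA HB.
  replace (fun x => A x \/ B x) with (fun x => exists n : nat, (if n then A else B) x).
  - apply borel_countable_union; intros [|n]; auto.
  - apply pred_ext; intro x; split.
    + intros [[|n] H]; auto.
    + intros [H|H]; [exists 0%nat | exists 1%nat]; auto.
Qed.

Lemma borel_and {T : Type} (d : T -> T -> R) A B :
  borel d A -> borel d B -> borel d (fun x => A x /\ B x).
Proof.
  intros HA HB.
  replace (fun x => A x /\ B x) with (fun x => ~ (~ A x \/ ~ B x))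
    by (apply pred_ext; intro x; tauto).
  apply (borel_compl d (fun x => ~ A x \/ ~ B x)), borel_or; apply borel_compl; auto.
Qed.

Lemma borel_diff {T : Type} (d : T -> T -> R) A B :
  borel d A -> borel d B -> borel d (fun x => A x /\ ~ B x).
Proof. intros; apply borel_and; auto; apply borel_compl; auto. Qed.

Lemma borel_const {T : Type} (d : T -> T -> R) (G : Prop) : borel d (fun _ => G).
Proof.
  destruct (classic G) as [HG|HG].
  - replace (fun _ : T => G) with (fun _ : T => True) by (apply pred_ext; tauto).
    apply borel_full.
  - replace (fun _ : T => G) with (fun _ : T => False) by (apply pred_ext; tauto).
    apply borel_empty.
Qed.

Section Metric.
Variables (T : Type) (d : T -> T -> R).
Hypothesis hd : is_metric d.

Lemma metric_self x : d x x = 0.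
Proof. apply hd; reflexivity. Qed.

Lemma metric_sym x y : d x y = d y x.
Proof. apply hd. Qed.

Lemma metric_triangle x y z : d x z <= d x y + d y z.
Proof. apply hd. Qed.

Lemma metric_nonneg x y : 0 <= d x y.
Proof.
  pose proof (metric_triangle x y x). rewrite metric_self, (metric_sym y x) in H. lra.
Qed.

Lemma metric_pos x y : x <> y -> 0 < d x y.
Proof.
  intros Hxy. destruct (metric_nonneg x y) as [|H]; auto.
  exfalso; apply Hxy, hd; auto.
Qed.

Lemma nbhd_open r A : is_open d (nbhd d r A).
Proof.
  intros x [a [Ha Hxa]]. exists (r - d x a). split; [lra|].
  intros y Hy. exists a; split; auto.
  pose proof (metric_triangle y x a). rewrite (metric_sym y x) in H. lra.
Qed.

Lemma nbhd_borel r A : borel d (nbhd d r A).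
Proof. apply borel_open, nbhd_open. Qed.

Lemma nbhd_self r A x : 0 < r -> A x -> nbhd d r A x.
Proof. intros Hr Hx. exists x; rewrite metric_self; auto. Qed.

Lemma nbhd_nbhd r s A x : nbhd d r (nbhd d s A) x -> nbhd d (r + s) A x.
Proof.
  intros [y [[a [Ha Hya]] Hxy]]. exists a; split; auto.
  pose proof (metric_triangle x y a). lra.
Qed.

End Metric.

Section Measure.
Variables (T : Type) (d : T -> T -> R) (m : (T -> Prop) -> R).
Hypothesis hm : borel_prob d m.

Lemma measure_nonneg A : borel d A -> 0 <= m A.
Proof. apply hm. Qed.

Lemma measure_empty : m (fun _ => False) = 0.
Proof.
  assert (Hcv : Un_cv (fun N => sum_f_R0 (fun _ => m (fun _ => False)) N) (m (fun _ => False))).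
  { pose proof (proj2 (proj2 hm) (fun _ _ => False)) as H; cbv beta in H.
    replace (fun x : T => exists n : nat, False) with (fun _ : T => False) in H
      by (apply pred_ext; firstorder).
    apply H; [intros; apply borel_empty | tauto]. }
  (* the partial sums grow by [m empty] at each step, yet converge *)
  assert (Hstep : Un_cv (fun N => sum_f_R0 (fun _ => m (fun _ => False)) (N + 1)
                               - sum_f_R0 (fun _ => m (fun _ => False)) N) 0).
  { replace 0 with (m (fun _ => False) - m (fun _ => False)) by ring.
    apply CV_minus; [apply CV_shift'|]; exact Hcv. }
  eapply UL_sequence; [|exact Hstep].
  replace (fun N => sum_f_R0 (fun _ => m (fun _ => False)) (N + 1)
                    - sum_f_R0 (fun _ => m (fun _ => False)) N)
    with (fun _ : nat => m (fun _ => False)).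
  - intros eps Heps; exists 0%nat; intros; unfold R_dist; rewrite Rminus_diag, Rabs_R0; lra.
  - apply functional_extensionality; intro N. rewrite Nat.add_1_r; simpl; ring.
Qed.

Lemma measure_disjoint_union A B :
  borel d A -> borel d B -> (forall x, A x -> B x -> False) ->
  m (fun x => A x \/ B x) = m A + m B.
Proof.
  intros HA HB HAB.
  set (S := fun n : nat => match n with 0 => A | 1 => B | _ => fun _ : T => False end).
  assert (Hcv : Un_cv (fun N => sum_f_R0 (fun n => m (S n)) N) (m (fun x => exists n, S n x))).
  { apply hm.
    - intros [|[|n]]; simpl; auto. apply borel_empty.
    - intros [|[|i]] [|[|j]] x Hij; simpl; intros; try tauto; eauto. }
  replace (fun x => exists n, S n x) with (fun x => A x \/ B x) in Hcv.
  2:{ apply pred_ext; intro x; split.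
      - intros [H|H]; [exists 0%nat | exists 1%nat]; auto.
      - intros [[|[|n]] H]; simpl in H; tauto. }
  apply (UL_sequence _ _ _ Hcv).
  intros eps Heps. exists 1%nat. intros [|n] Hn; [lia|].
  replace (sum_f_R0 (fun k => m (S k)) (Datatypes.S n)) with (m A + m B).
  { unfold R_dist; rewrite Rminus_diag, Rabs_R0; lra. }
  clear Hn. induction n; simpl; [reflexivity|]. simpl in IHn. rewrite <- IHn, measure_empty; ring.
Qed.

Lemma measure_split C V :
  borel d C -> borel d V -> m C = m (fun x => C x /\ V x) + m (fun x => C x /\ ~ V x).
Proof.
  intros HC HV. rewrite <- measure_disjoint_union.
  - f_equal. apply pred_ext; intro x. destruct (classic (V x)); tauto.
  - apply borel_and; auto.
  - apply borel_diff; auto.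
  - tauto.
Qed.

Lemma measure_mono A B : borel d A -> borel d B -> (forall x, A x -> B x) -> m A <= m B.
Proof.
  intros HA HB HAB. rewrite (measure_split B A HB HA).
  replace (fun x => B x /\ A x) with A by (apply pred_ext; intro x; split; auto; tauto).
  pose proof (measure_nonneg _ (borel_diff d B A HB HA)). lra.
Qed.

Lemma measure_le_1 A : borel d A -> m A <= 1.
Proof.
  intros HA. rewrite <- (proj1 hm). apply measure_mono; auto. apply borel_full.
Qed.

Lemma measure_chain_union_le (S : nat -> T -> Prop) c :
  (forall n, borel d (S n)) -> (forall n x, S n x -> S (Datatypes.S n) x) ->
  (forall n, m (S n) <= c) -> m (fun x => exists n, S n x) <= c.
Proof.
  intros HS Hinc Hc.
  assert (Hle : forall i j x, (i <= j)%nat -> S i x -> S j x)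
    by (intros i j x Hij; induction Hij; auto).
  set (L := fun n => match n with
                     | 0 => S 0%nat
                     | Datatypes.S k => fun x => S (Datatypes.S k) x /\ ~ S k x end).
  assert (HL : forall n, borel d (L n)) by (intros [|k]; simpl; auto; apply borel_diff; auto).
  assert (Hsum : forall N, sum_f_R0 (fun n => m (L n)) N = m (S N)).
  { induction N; simpl; auto. rewrite IHN, (measure_split (S (Datatypes.S N)) (S N)) by auto.
    replace (fun x => S (Datatypes.S N) x /\ S N x) with (S N)
      by (apply pred_ext; intro x; split; [intros H; split; auto | tauto]).
    reflexivity. }
  assert (Hdisj : forall i j x, i <> j -> L i x -> L j x -> False).
  { assert (Hlt : forall i j x, (i < j)%nat -> L i x -> L j x -> False).
    { intros i [|j] x Hij Hi Hj; [lia|]. destruct Hj as [_ Hj].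
      apply Hj, (Hle i); [lia|]. destruct i; simpl in Hi; tauto. }
    intros i j x Hij Hi Hj. destruct (Nat.lt_ge_cases i j); [eauto|].
    apply (Hlt j i x); auto; lia. }
  pose proof (proj2 (proj2 hm) L HL Hdisj) as Hcv.
  replace (fun x => exists n, L n x) with (fun x => exists n, S n x) in Hcv.
  2:{ apply pred_ext; intro x; split.
      - intros [n Hn]. induction n.
        + exists 0%nat; auto.
        + destruct (classic (S n x)); auto. exists (Datatypes.S n); simpl; auto.
      - intros [n Hn]; exists n; destruct n; simpl in Hn; tauto. }
  apply Rnot_lt_le; intro Hgt.
  destruct (Hcv (m (fun x => exists n, S n x) - c)) as [N HN]; [lra|].
  specialize (HN N (le_n _)). rewrite Hsum in HN. specialize (Hc N).
  unfold R_dist in HN. apply Rabs_def2 in HN. lra.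
Qed.

End Measure.

Definition three_point (e a : R) (x y : option bool) : R :=
  match x, y with
  | None, None => 0
  | None, Some _ | Some _, None => a
  | Some u, Some v => if Bool.eqb u v then 0 else e
  end.

Lemma three_point_metric e a : 0 < e -> 0 < a -> e <= 2 * a -> is_metric (three_point e a).
Proof.
  intros He Ha Hea. split; [|split].
  - intros [[|]|] [[|]|]; simpl; split; intros H; try congruence; lra.
  - intros [[|]|] [[|]|]; reflexivity.
  - intros [[|]|] [[|]|] [[|]|]; simpl; lra.
Qed.

Lemma triangle_realizable c a : 0 <= c -> c <= 2 * a ->
  exists (d : option bool -> option bool -> R) z1 z2 z3,
    is_metric d /\ d z1 z2 = c /\ d z2 z3 = a /\ d z1 z3 = a.
Proof.
  intros Hc Hca. destruct (Req_dec c 0) as [Hc0|Hc0]; [destruct (Req_dec a 0) as [Ha0|Ha0]|].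
  - exists (three_point 1 1), (Some true), (Some true), (Some true).
    split; [apply three_point_metric; lra|]. simpl; lra.
  - exists (three_point a a), (Some true), (Some true), None.
    split; [apply three_point_metric; lra|]. simpl; lra.
  - exists (three_point c a), (Some true), (Some false), None.
    split; [apply three_point_metric; lra|]. simpl; lra.
Qed.

Definition continuous_map {T U : Type} (dT : T -> T -> R) (dU : U -> U -> R) (f : T -> U) :=
  forall x r, 0 < r -> exists s, 0 < s /\ forall y, dT x y < s -> dU (f x) (f y) < r.

Lemma open_preimage {T U : Type} (dT : T -> T -> R) (dU : U -> U -> R) f O :
  continuous_map dT dU f -> is_open dU O -> is_open dT (fun x => O (f x)).
Proof.
  intros Hf HO x Hx. destruct (HO _ Hx) as [r [Hr Hball]].
  destruct (Hf x r Hr) as [s [Hs Hfs]]. exists s; split; auto.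
Qed.

Lemma borel_preimage {T U : Type} (dT : T -> T -> R) (dU : U -> U -> R) f A :
  continuous_map dT dU f -> borel dU A -> borel dT (fun x => A (f x)).
Proof.
  intros Hf HA. apply (HA (fun B => borel dT (fun x => B (f x)))).
  - split; [|split].
    + apply borel_full.
    + intros B HB. apply (borel_compl dT (fun x => B (f x)) HB).
    + intros B HB. apply (borel_countable_union dT (fun n x => B n (f x)) HB).
  - intros O HO. apply borel_open, (open_preimage dT dU); auto.
Qed.

Section ClassF2.
Variable F : R -> R -> R.
Hypothesis hF : F2 F.

Lemma dprod_metric {T U : Type} (dT : T -> T -> R) (dU : U -> U -> R) :
  is_metric dT -> is_metric dU -> is_metric (dprod F dT dU).
Proof. apply hF. Qed.

(* Read the triangle inequality of [d_F] on a product of two realizing triangles. *)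
Lemma F2_le_twice c1 a1 c2 a2 :
  0 <= c1 -> c1 <= 2 * a1 -> 0 <= c2 -> c2 <= 2 * a2 -> F c1 c2 <= 2 * F a1 a2.
Proof.
  intros H1 H2 H3 H4.
  destruct (triangle_realizable c1 a1 H1 H2) as [d [z1 [z2 [z3 [Hd [E1 [E2 E3]]]]]]].
  destruct (triangle_realizable c2 a2 H3 H4) as [e [w1 [w2 [w3 [He [G1 [G2 G3]]]]]]].
  pose proof (metric_triangle _ _ (dprod_metric d e Hd He) (z1, w1) (z3, w3) (z2, w2)) as Ht.
  unfold dprod in Ht; simpl in Ht.
  rewrite (metric_sym _ _ Hd z3 z2), (metric_sym _ _ He w3 w2) in Ht.
  rewrite E1, E2, E3, G1, G2, G3 in Ht. lra.
Qed.

Lemma F2_zero : F 0 0 = 0.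
Proof.
  pose proof (three_point_metric 1 1 Rlt_0_1 Rlt_0_1 ltac:(lra)) as Hd.
  exact (metric_self _ _ (dprod_metric _ _ Hd Hd) (Some true, Some true)).
Qed.

Lemma F2_pos a b : 0 <= a -> 0 <= b -> a <> 0 \/ b <> 0 -> 0 < F a b.
Proof.
  intros Ha Hb Hab.
  destruct (triangle_realizable a a Ha ltac:(lra)) as [d [x1 [y1 [_ [Hd [Ea _]]]]]].
  destruct (triangle_realizable b b Hb ltac:(lra)) as [e [x2 [y2 [_ [He [Eb _]]]]]].
  rewrite <- Ea, <- Eb.
  apply (metric_pos _ (dprod F d e) (dprod_metric d e Hd He) (x1, x2) (y1, y2)).
  intros Heq; injection Heq as <- <-.
  rewrite (metric_self _ _ Hd) in Ea. rewrite (metric_self _ _ He) in Eb. lra.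
Qed.

Lemma F2_small r : 0 < r -> exists delta, 0 < delta /\
  forall u v, 0 <= u -> 0 <= v -> u < delta -> v < delta -> F u v < r.
Proof.
  intros Hr. destruct (proj1 (proj2 hF) 0 0 (Rle_refl 0) (Rle_refl 0) r Hr) as [delta [Hdelta Hc]].
  exists delta; split; auto. intros u v Hu Hv Hud Hvd.
  rewrite F2_zero in Hc. specialize (Hc u v Hu Hv).
  rewrite !Rminus_0_r, !Rabs_right in Hc by lra.
  specialize (Hc Hud Hvd). apply Rabs_def2 in Hc. lra.
Qed.

End ClassF2.

Definition bool_of_prop (P : Prop) : bool :=
  if excluded_middle_informative P then true else false.

Lemma bool_of_prop_iff (P : Prop) : bool_of_prop P = true <-> P.
Proof. unfold bool_of_prop; destruct excluded_middle_informative; intuition discriminate. Qed.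

Lemma bool_of_prop_true (P : Prop) : P -> bool_of_prop P = true.
Proof. unfold bool_of_prop; destruct excluded_middle_informative; tauto. Qed.

Lemma bool_of_prop_false (P : Prop) : ~ P -> bool_of_prop P = false.
Proof. unfold bool_of_prop; destruct excluded_middle_informative; tauto. Qed.

(* [signature As x] lists which of the sets [As] contain [x]; the atoms of the finite
   algebra generated by [As] are the level sets of [signature As]. *)
Fixpoint signature {T : Type} (As : list (T -> Prop)) (x : T) : list bool :=
  match As with
  | nil => nil
  | A :: As' => bool_of_prop (A x) :: signature As' x
  end.

Fixpoint meets (s t : list bool) : bool :=
  match s, t with
  | a :: s', b :: t' => (a && b) || meets s' t'
  | _, _ => false
  end.

Lemma meets_comm s t : meets s t = meets t s.
Proof.
  revert t; induction s as [|a s IH]; intros [|b t]; simpl; auto.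
  rewrite IH, Bool.andb_comm; auto.
Qed.

(* The union of the [As] selected by the boolean mask [s]. *)
Definition sel_union {T : Type} (As : list (T -> Prop)) (s : list bool) : T -> Prop :=
  fun x => meets s (signature As x) = true.

(* [atom_sum m As f C] is the sum over all signatures [s] of [f s * m (C ∩ atom s)]. *)
Fixpoint atom_sum {T : Type} (m : (T -> Prop) -> R) (As : list (T -> Prop))
  (f : list bool -> R) (C : T -> Prop) : R :=
  match As with
  | nil => f nil * m C
  | A :: As' => atom_sum m As' (fun s => f (true :: s)) (fun x => C x /\ A x)
              + atom_sum m As' (fun s => f (false :: s)) (fun x => C x /\ ~ A x)
  end.

Lemma atom_sum_add {T : Type} m (As : list (T -> Prop)) f g C :
  atom_sum m As (fun s => f s + g s) C = atom_sum m As f C + atom_sum m As g C.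
Proof.
  revert f g C; induction As as [|A As IH]; intros f g C; simpl; [ring|].
  rewrite (IH (fun s => f (true :: s))), (IH (fun s => f (false :: s))). ring.
Qed.

Lemma atom_sum_scale {T : Type} m (As : list (T -> Prop)) f c C :
  atom_sum m As (fun s => f s * c) C = atom_sum m As f C * c.
Proof.
  revert f C; induction As as [|A As IH]; intros f C; simpl; [ring|].
  rewrite (IH (fun s => f (true :: s))), (IH (fun s => f (false :: s))). ring.
Qed.

Lemma atom_sum_exchange {T U : Type} m1 m2 (As : list (T -> Prop)) (Bs : list (U -> Prop)) h C D :
  atom_sum m1 As (fun s => atom_sum m2 Bs (h s) D) C
  = atom_sum m2 Bs (fun t => atom_sum m1 As (fun s => h s t) C) D.
Proof.
  revert h C; induction As as [|A As IH]; intros h C; simpl.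
  - rewrite <- atom_sum_scale. reflexivity.
  - rewrite (IH (fun s => h (true :: s))), (IH (fun s => h (false :: s))), <- atom_sum_add.
    reflexivity.
Qed.

Section AtomSumMeasure.
Variables (T : Type) (d : T -> T -> R) (m : (T -> Prop) -> R).
Hypothesis hm : borel_prob d m.

Lemma atom_sum_le (As : list (T -> Prop)) f g C :
  borel d C -> Forall (borel d) As -> (forall s, f s <= g s) ->
  atom_sum m As f C <= atom_sum m As g C.
Proof.
  revert f g C; induction As as [|A As IH]; intros f g C HC HAs Hfg; simpl.
  - apply Rmult_le_compat_r; auto. apply (measure_nonneg _ d); auto.
  - inversion HAs; subst. apply Rplus_le_compat; apply IH; auto.
    + apply borel_and; auto.
    + apply borel_diff; auto.
Qed.

Lemma atom_sum_const (As : list (T -> Prop)) c C :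
  borel d C -> Forall (borel d) As -> atom_sum m As (fun _ => c) C = c * m C.
Proof.
  revert C; induction As as [|A As IH]; intros C HC HAs; simpl; auto.
  inversion HAs; subst. rewrite !IH; auto.
  - rewrite (measure_split _ d m hm C A); auto. ring.
  - apply borel_diff; auto.
  - apply borel_and; auto.
Qed.

End AtomSumMeasure.

Lemma signature_cons_split {Z T : Type} (pi : Z -> T) A (As : list (T -> Prop))
  (K : list bool -> Z -> Prop) (C : T -> Prop) :
  (fun z => C (pi z) /\ K (signature (A :: As) (pi z)) z)
  = (fun z => (C (pi z) /\ A (pi z)) /\ K (true :: signature As (pi z)) z
           \/ (C (pi z) /\ ~ A (pi z)) /\ K (false :: signature As (pi z)) z).
Proof.
  apply pred_ext; intro z; simpl. destruct (classic (A (pi z))) as [Ha|Ha].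
  - rewrite (bool_of_prop_true _ Ha); tauto.
  - rewrite (bool_of_prop_false _ Ha); tauto.
Qed.

(* A set described through the signature of the [As] (seen through [pi]) splits along the
   atoms; its measure is then read off atom by atom. *)
Section AtomDecomposition.
Variables (Z T : Type) (dZ : Z -> Z -> R) (dT : T -> T -> R) (pi : Z -> T).
Hypothesis borel_pi : forall A, borel dT A -> borel dZ (fun z => A (pi z)).

Lemma borel_signature (As : list (T -> Prop)) (K : list bool -> Z -> Prop) C :
  Forall (borel dT) As -> borel dT C -> (forall s, borel dZ (K s)) ->
  borel dZ (fun z => C (pi z) /\ K (signature As (pi z)) z).
Proof.
  revert K C; induction As as [|A As IH]; intros K C HAs HC HK.
  - apply borel_and; [apply borel_pi, HC | exact (HK nil)].
  - inversion HAs; subst. rewrite signature_cons_split. apply borel_or.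
    + exact (IH (fun s => K (true :: s)) _ H2 (borel_and dT _ _ HC H1) (fun s => HK _)).
    + exact (IH (fun s => K (false :: s)) _ H2 (borel_diff dT _ _ HC H1) (fun s => HK _)).
Qed.

Variable Q : (Z -> Prop) -> R.
Hypothesis hQ : borel_prob dZ Q.

Lemma measure_signature (m : (T -> Prop) -> R) (As : list (T -> Prop))
  (K : list bool -> Z -> Prop) (f : list bool -> R) C :
  Forall (borel dT) As -> borel dT C -> (forall s, borel dZ (K s)) ->
  (forall s D, borel dT D -> Q (fun z => D (pi z) /\ K s z) = f s * m D) ->
  Q (fun z => C (pi z) /\ K (signature As (pi z)) z) = atom_sum m As f C.
Proof.
  revert K f C; induction As as [|A As IH]; intros K f C HAs HC HK Hf; [exact (Hf nil C HC)|].
  inversion HAs; subst. rewrite signature_cons_split, (measure_disjoint_union _ dZ Q hQ).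
  cbn [atom_sum].
  - f_equal.
    + exact (IH (fun s => K (true :: s)) (fun s => f (true :: s)) _ H2
               (borel_and dT _ _ HC H1) (fun s => HK _) (fun s => Hf _)).
    + exact (IH (fun s => K (false :: s)) (fun s => f (false :: s)) _ H2
               (borel_diff dT _ _ HC H1) (fun s => HK _) (fun s => Hf _)).
  - exact (borel_signature As (fun s => K (true :: s)) _ H2 (borel_and dT _ _ HC H1)
             (fun s => HK _)).
  - exact (borel_signature As (fun s => K (false :: s)) _ H2 (borel_diff dT _ _ HC H1)
             (fun s => HK _)).
  - intros z; tauto.
Qed.

End AtomDecomposition.

Section SelectedUnions.
Variables (T : Type) (d : T -> T -> R).

Lemma sel_union_signature (As : list (T -> Prop)) s :
  sel_union As s = (fun x => True /\ (fun t (_ : T) => meets s t = true) (signature As x) x).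
Proof. apply pred_ext; intro x; unfold sel_union; tauto. Qed.

Lemma borel_sel_union (As : list (T -> Prop)) s :
  Forall (borel d) As -> borel d (sel_union As s).
Proof.
  intros HAs. rewrite sel_union_signature.
  exact (borel_signature T T d d (fun x => x) (fun A HA => HA) As
           (fun t _ => meets s t = true) (fun _ => True) HAs (borel_full d)
           (fun t => borel_const d _)).
Qed.

Lemma measure_sel_union m (As : list (T -> Prop)) s :
  borel_prob d m -> Forall (borel d) As ->
  m (sel_union As s) = atom_sum m As (fun t => if meets s t then 1 else 0) (fun _ => True).
Proof.
  intros Hm HAs. rewrite sel_union_signature.
  apply (measure_signature T T d d (fun x => x) (fun A HA => HA) m Hm m As
           (fun t _ => meets s t = true) _ (fun _ => True));
    [exact HAs | apply borel_full | intro t; apply borel_const |].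
  intros t D HD. destruct (meets s t); rewrite ?Rmult_1_l, ?Rmult_0_l.
  - f_equal. apply pred_ext; tauto.
  - rewrite <- (measure_empty _ d m Hm). f_equal. apply pred_ext; intuition discriminate.
Qed.

Lemma nbhd_sel_union r (As : list (T -> Prop)) s :
  nbhd d r (sel_union As s) = sel_union (map (nbhd d r) As) s.
Proof.
  apply pred_ext; unfold sel_union, nbhd.
  revert s; induction As as [|A As IH]; intros [|b s] y; simpl;
    try (split; [intros [_ [H _]] | intros H]; discriminate).
  rewrite Bool.orb_true_iff, Bool.andb_true_iff, bool_of_prop_iff, <- IH.
  split.
  - intros [y0 [H Hd]].
    rewrite Bool.orb_true_iff, Bool.andb_true_iff, bool_of_prop_iff in H.
    destruct H as [[Hb HA]|H]; [left; split; auto; exists y0 | right; exists y0]; auto.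
  - intros [[Hb [y0 [HA Hd]]]|[y0 [H Hd]]]; exists y0; split; auto;
      rewrite Bool.orb_true_iff, Bool.andb_true_iff, bool_of_prop_iff; auto.
Qed.

End SelectedUnions.

Lemma atom_sum_fubini {T U : Type} (dT : T -> T -> R) (dU : U -> U -> R) m1 m2
  (As : list (T -> Prop)) (Bs : list (U -> Prop)) :
  borel_prob dT m1 -> borel_prob dU m2 -> Forall (borel dT) As -> Forall (borel dU) Bs ->
  atom_sum m1 As (fun s => m2 (sel_union Bs s)) (fun _ => True)
  = atom_sum m2 Bs (fun t => m1 (sel_union As t)) (fun _ => True).
Proof.
  intros Hm1 Hm2 HAs HBs.
  replace (fun s => m2 (sel_union Bs s))
    with (fun s => atom_sum m2 Bs (fun t => if meets s t then 1 else 0) (fun _ => True))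
    by (apply functional_extensionality; intro s; symmetry; apply (measure_sel_union U dU); auto).
  rewrite atom_sum_exchange. f_equal. apply functional_extensionality; intro t.
  rewrite (measure_sel_union T dT); auto. f_equal.
  apply functional_extensionality; intro s. rewrite meets_comm; reflexivity.
Qed.

Lemma atom_sum_prok_le {T U : Type} (dT : T -> T -> R) (dU : U -> U -> R) m n n' lam b
  (As : list (T -> Prop)) (Bs : list (U -> Prop)) :
  borel_prob dT m -> Forall (borel dT) As -> Forall (borel dU) Bs -> prok_adm dU lam n n' b ->
  atom_sum m As (fun s => n' (sel_union Bs s)) (fun _ => True)
  <= atom_sum m As (fun s => n (sel_union (map (nbhd dU b) Bs) s)) (fun _ => True) + lam * b.
Proof.
  intros Hm HAs HBs [_ Hadm].
  apply Rle_trans with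
    (atom_sum m As (fun s => n (sel_union (map (nbhd dU b) Bs) s) + lam * b) (fun _ => True)).
  - apply (atom_sum_le T dT m Hm); auto using borel_full. intro s.
    rewrite <- nbhd_sel_union. pose proof (Hadm _ (borel_sel_union U dU Bs s HBs)). lra.
  - rewrite atom_sum_add, (atom_sum_const T dT m Hm), (proj1 Hm); auto using borel_full. lra.
Qed.

Lemma separable_cells {T : Type} (d : T -> T -> R) : is_metric d -> separable d ->
  exists U : nat -> nat -> T -> Prop,
    (forall i k, borel d (U i k)) /\ (forall k x, exists i, U i k x) /\
    (forall i k x y, U i k x -> U i k y -> d x y < 2 * / INR (S k)).
Proof.
  intros hd [D [[g Hg] HD]].
  assert (Hrad : forall k, 0 < / INR (S k)) by (intro k; apply Rinv_0_lt_compat, lt_0_INR; lia).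
  exists (fun i k => nbhd d (/ INR (S k)) (fun z => D z /\ g z = i)). split; [|split].
  - intros i k; apply nbhd_borel, hd.
  - intros k x. destruct (HD x _ (Hrad k)) as [z [Hz Hxz]].
    exists (g z), z; auto.
  - intros i k x y [z1 [[Hz1 Hg1] H1]] [z2 [[Hz2 Hg2] H2]].
    assert (z1 = z2) as <- by (apply Hg; congruence).
    pose proof (metric_triangle _ _ hd x z1 y). rewrite (metric_sym _ _ hd z1 y) in H. lra.
Qed.

Definition rect_union {X Y : Type} (l : list ((X -> Prop) * (Y -> Prop))) : X * Y -> Prop :=
  fun p => exists AB, In AB l /\ fst AB (fst p) /\ snd AB (snd p).

Lemma rect_union_signature {X Y : Type} (l : list ((X -> Prop) * (Y -> Prop))) :
  rect_union l
  = (fun p => True /\ sel_union (map snd l) (signature (map fst l) (fst p)) (snd p)).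
Proof.
  apply pred_ext; intro p. unfold rect_union, sel_union.
  induction l as [|[A B] l IH]; simpl.
  - split; [intros [_ [[] _]] | intros [_ H]; discriminate].
  - rewrite Bool.orb_true_iff, Bool.andb_true_iff, !bool_of_prop_iff.
    split.
    + intros [AB [[<-|Hin] HAB]]; [tauto|]. split; [exact I|]. right; apply IH; eauto.
    + intros [_ [[HA HB]|H]]; [exists (A, B); simpl; auto|].
      destruct (proj2 IH (conj I H)) as [AB [Hin HAB]]; eauto.
Qed.

Definition thicken {X Y : Type} (dX : X -> X -> R) (dY : Y -> Y -> R) (a b : R)
  (l : list ((X -> Prop) * (Y -> Prop))) : list ((X -> Prop) * (Y -> Prop)) :=
  map (fun AB => (nbhd dX a (fst AB), nbhd dY b (snd AB))) l.

Lemma Forall_borel_nbhd {T : Type} (d : T -> T -> R) r (As : list (T -> Prop)) :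
  is_metric d -> Forall (borel d) (map (nbhd d r) As).
Proof.
  intros hd. apply Forall_forall; intros A HA.
  apply in_map_iff in HA as [B [<- _]]. apply nbhd_borel, hd.
Qed.

Lemma map_fst_thicken {X Y : Type} (dX : X -> X -> R) (dY : Y -> Y -> R) a b
  (l : list ((X -> Prop) * (Y -> Prop))) :
  map fst (thicken dX dY a b l) = map (nbhd dX a) (map fst l).
Proof. unfold thicken; rewrite !map_map; reflexivity. Qed.

Lemma map_snd_thicken {X Y : Type} (dX : X -> X -> R) (dY : Y -> Y -> R) a b
  (l : list ((X -> Prop) * (Y -> Prop))) :
  map snd (thicken dX dY a b l) = map (nbhd dY b) (map snd l).
Proof. unfold thicken; rewrite !map_map; reflexivity. Qed.

Lemma prokhorov_is_inf {T : Type} (d : T -> T -> R) lam m m' :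
  is_metric d -> 0 < lam -> borel_prob d m -> borel_prob d m' ->
  is_inf (prok_adm d lam m m') (prokhorov d lam m m').
Proof.
  intros hd Hlam Hm Hm'. unfold prokhorov. apply epsilon_spec.
  (* [1 / lam] is admissible since measures are bounded by 1; negate to use [completeness]. *)
  set (E := fun x => prok_adm d lam m m' (- x)).
  assert (Hbound : bound E) by (exists 0; intros x [Hx _]; lra).
  assert (Hne : exists x, E x).
  { exists (- / lam). unfold E. rewrite Ropp_involutive. split.
    - apply Rinv_0_lt_compat; auto.
    - intros A HA. rewrite Rinv_r by lra.
      pose proof (measure_nonneg _ d m Hm (nbhd d (/ lam) A) (nbhd_borel _ d hd _ _)).
      pose proof (measure_le_1 _ d m' Hm' A HA). lra. }
  destruct (completeness E Hbound Hne) as [l [Hub Hlub]].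
  exists (- l). split.
  - intros x Hx. assert (E (- x)) by (unfold E; rewrite Ropp_involutive; auto).
    specialize (Hub _ H). lra.
  - intros b Hb. assert (l <= - b); [|lra].
    apply Hlub. intros y Hy. specialize (Hb _ Hy). lra.
Qed.

Lemma is_inf_approx S m eta : is_inf S m -> 0 < eta -> exists a, S a /\ m <= a /\ a < m + eta.
Proof.
  intros [Hlow Hgreatest] Heta. apply NNPP; intro Hn.
  assert (Hbound : forall x, S x -> m + eta <= x).
  { intros x Hx. apply Rnot_lt_le; intro Hlt. apply Hn. exists x; auto. }
  specialize (Hgreatest _ Hbound). lra.
Qed.

Section ProductSpace.
Variables (X Y : Type) (dX : X -> X -> R) (dY : Y -> Y -> R) (F : R -> R -> R).
Hypotheses (hF : F2 F) (hX : is_metric dX) (hY : is_metric dY).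

Local Notation dF := (dprod F dX dY).

Lemma fst_continuous : continuous_map dF dX fst.
Proof.
  intros p r Hr.
  pose proof (F2_pos F hF r 0 ltac:(lra) (Rle_refl 0) (or_introl (Rgt_not_eq _ _ Hr))).
  exists (F r 0 / 2); split; [lra|]. intros q Hq. apply Rnot_le_lt; intro Hge.
  pose proof (metric_nonneg _ _ hY (snd p) (snd q)).
  assert (F r 0 <= 2 * dF p q) by (apply F2_le_twice; auto; lra). lra.
Qed.

Lemma snd_continuous : continuous_map dF dY snd.
Proof.
  intros p r Hr.
  pose proof (F2_pos F hF 0 r (Rle_refl 0) ltac:(lra) (or_intror (Rgt_not_eq _ _ Hr))).
  exists (F 0 r / 2); split; [lra|]. intros q Hq. apply Rnot_le_lt; intro Hge.
  pose proof (metric_nonneg _ _ hX (fst p) (fst q)).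
  assert (F 0 r <= 2 * dF p q) by (apply F2_le_twice; auto; lra). lra.
Qed.

Lemma borel_fst A : borel dX A -> borel dF (fun p => A (fst p)).
Proof. apply borel_preimage, fst_continuous. Qed.

Lemma borel_snd B : borel dY B -> borel dF (fun p => B (snd p)).
Proof. apply borel_preimage, snd_continuous. Qed.

Lemma borel_rect_union (l : list ((X -> Prop) * (Y -> Prop))) :
  Forall (borel dX) (map fst l) -> Forall (borel dY) (map snd l) -> borel dF (rect_union l).
Proof.
  intros HA HB. rewrite rect_union_signature.
  exact (borel_signature _ _ dF dX fst borel_fst (map fst l)
           (fun s p => sel_union (map snd l) s (snd p)) (fun _ => True) HA (borel_full dX)
           (fun s => borel_snd _ (borel_sel_union _ _ _ s HB))).
Qed.

Lemma product_measure_rect_union m1 m2 P (l : list ((X -> Prop) * (Y -> Prop))) :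
  is_product_measure dX dY dF m1 m2 P ->
  Forall (borel dX) (map fst l) -> Forall (borel dY) (map snd l) ->
  P (rect_union l)
  = atom_sum m1 (map fst l) (fun s => m2 (sel_union (map snd l) s)) (fun _ => True).
Proof.
  intros [HP Hrect] HA HB. rewrite rect_union_signature.
  apply (measure_signature _ _ dF dX fst borel_fst P HP m1 (map fst l)
           (fun s p => sel_union (map snd l) s (snd p)) (fun s => m2 (sel_union (map snd l) s))
           (fun _ => True)); auto using borel_full.
  - intro s; apply borel_snd, borel_sel_union, HB.
  - intros s D HD. rewrite Hrect, Rmult_comm; auto using borel_sel_union.
Qed.

Lemma thicken_sub_nbhd a b r O (l : list ((X -> Prop) * (Y -> Prop))) :
  (forall AB x y, In AB l -> fst AB x -> snd AB y -> O (x, y)) -> 2 * F a b < r ->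
  forall p, rect_union (thicken dX dY a b l) p -> nbhd dF r O p.
Proof.
  intros HO Hr p [AB' [Hin HAB']]. apply in_map_iff in Hin as [AB [<- Hin]].
  destruct HAB' as [[x0 [Hx0 Hdx]] [y0 [Hy0 Hdy]]].
  exists (x0, y0); split; [eauto|].
  pose proof (metric_nonneg _ _ hX (fst p) x0). pose proof (metric_nonneg _ _ hY (snd p) y0).
  assert (F (dX (fst p) x0) (dY (snd p) y0) <= 2 * F a b) by (apply F2_le_twice; auto; lra).
  unfold dprod; simpl; lra.
Qed.

Lemma open_contains_box O p : is_open dF O -> O p ->
  exists k, forall x y, dX (fst p) x < 2 * / INR (S k) -> dY (snd p) y < 2 * / INR (S k) ->
    O (x, y).
Proof.
  intros HO Hp. destruct (HO p Hp) as [r [Hr Hball]].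
  destruct (F2_small F hF r Hr) as [delta [Hdelta Hsmall]].
  destruct (archimed_cor1 (delta / 2)) as [K [HK HK0]]; [lra|].
  exists (pred K). rewrite Nat.succ_pred_pos by auto. intros x y Hx Hy.
  apply (Hball (x, y)). unfold dprod; simpl. apply Hsmall; try apply metric_nonneg; auto; lra.
Qed.

Lemma open_rect_exhaustion O : separable dX -> separable dY -> is_open dF O ->
  exists l : nat -> list ((X -> Prop) * (Y -> Prop)),
    (forall N, Forall (borel dX) (map fst (l N)) /\ Forall (borel dY) (map snd (l N))) /\
    (forall N AB x y, In AB (l N) -> fst AB x -> snd AB y -> O (x, y)) /\
    (forall N p, rect_union (l N) p -> rect_union (l (S N)) p) /\
    (forall p, O p -> exists N, rect_union (l N) p).
Proof.
  intros sX sY HO.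
  destruct (separable_cells dX hX sX) as [UX [HUX [coverX diamX]]].
  destruct (separable_cells dY hY sY) as [UY [HUY [coverY diamY]]].
  (* cell (i, j, k) is the product of two small cells, emptied unless it lies inside O *)
  set (cell := fun t : nat * nat * nat => let '(i, j, k) := t in
         ((fun x => UX i k x /\ forall x' y', UX i k x' -> UY j k y' -> O (x', y')), UY j k)).
  set (idx := fun N => list_prod (list_prod (seq 0 (S N)) (seq 0 (S N))) (seq 0 (S N))).
  assert (Hidx : forall N i j k, In (i, j, k) (idx N) <-> (i <= N /\ j <= N /\ k <= N)%nat).
  { intros N i j k. unfold idx. rewrite !in_prod_iff, !in_seq. lia. }
  assert (Hmem : forall N p, rect_union (map cell (idx N)) p <->
            exists i j k, (i <= N /\ j <= N /\ k <= N)%nat /\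
              fst (cell (i, j, k)) (fst p) /\ snd (cell (i, j, k)) (snd p)).
  { intros N p. split.
    - intros [AB [Hin HAB]]. apply in_map_iff in Hin as [[[i j] k] [<- Hin]].
      exists i, j, k. rewrite <- Hidx. auto.
    - intros [i [j [k [Hijk HAB]]]]. exists (cell (i, j, k)).
      split; auto. apply in_map, Hidx; auto. }
  exists (fun N => map cell (idx N)). split; [|split; [|split]].
  - intro N. rewrite !map_map. split; apply Forall_forall; intros A HA;
      apply in_map_iff in HA as [[[i j] k] [<- _]]; simpl.
    + exact (borel_and dX _ _ (HUX i k) (borel_const dX _)).
    + exact (HUY j k).
  - intros N AB x y Hin. apply in_map_iff in Hin as [[[i j] k] [<- _]].
    simpl. intros [Hx H] Hy; auto.
  - intros N p Hp. apply Hmem in Hp as [i [j [k [Hijk HAB]]]]. apply Hmem.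
    exists i, j, k. split; [lia | auto].
  - intros p Hp. destruct (open_contains_box O p HO Hp) as [k Hbox].
    destruct (coverX k (fst p)) as [i Hi]. destruct (coverY k (snd p)) as [j Hj].
    exists (Nat.max i (Nat.max j k)). apply Hmem. exists i, j, k. split; [lia|].
    simpl. repeat split; auto. intros x y Hx Hy.
    apply Hbox; [exact (diamX i k _ _ Hi Hx) | exact (diamY j k _ _ Hj Hy)].
Qed.

Section Transport.
Variables (mu mu' : (X -> Prop) -> R) (nu nu' : (Y -> Prop) -> R) (P P' : (X * Y -> Prop) -> R).
Hypotheses (hmu : borel_prob dX mu) (hmu' : borel_prob dX mu') (hnu : borel_prob dY nu)
  (hP : is_product_measure dX dY dF mu nu P) (hP' : is_product_measure dX dY dF mu' nu' P').
Variable lam : R.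
Hypothesis hlam : 0 < lam.

(* Fubini over the atoms of the two finite algebras, applying the admissibility of [b]
   on the [Y] side and then that of [a] on the [X] side. *)
Lemma rect_union_transport a b (l : list ((X -> Prop) * (Y -> Prop))) :
  Forall (borel dX) (map fst l) -> Forall (borel dY) (map snd l) ->
  prok_adm dX lam mu mu' a -> prok_adm dY lam nu nu' b ->
  P' (rect_union l) <= P (rect_union (thicken dX dY a b l)) + lam * a + lam * b.
Proof.
  intros HA HB Ha Hb.
  assert (HAa : Forall (borel dX) (map (nbhd dX a) (map fst l))) by (apply Forall_borel_nbhd, hX).
  assert (HBb : Forall (borel dY) (map (nbhd dY b) (map snd l))) by (apply Forall_borel_nbhd, hY).
  rewrite (product_measure_rect_union mu' nu' P' l hP' HA HB).
  rewrite (product_measure_rect_union mu nu P (thicken dX dY a b l) hP);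
    rewrite ?map_fst_thicken, ?map_snd_thicken; auto.
  eapply Rle_trans;
    [apply (atom_sum_prok_le dX dY mu' nu nu' lam b (map fst l) (map snd l)); auto|].
  rewrite (atom_sum_fubini dX dY mu' nu); auto.
  eapply Rle_trans;
    [apply Rplus_le_compat_r, (atom_sum_prok_le dY dX nu mu mu' lam a _ (map fst l)); auto|].
  rewrite <- (atom_sum_fubini dX dY mu nu); auto. lra.
Qed.

Lemma open_transport a b r O : separable dX -> separable dY ->
  prok_adm dX lam mu mu' a -> prok_adm dY lam nu nu' b -> 2 * F a b < r -> is_open dF O ->
  P' O <= P (nbhd dF r O) + lam * a + lam * b.
Proof.
  intros sX sY Ha Hb Hr HO.
  destruct (open_rect_exhaustion O sX sY HO) as [l [Hl [HlO [Hchain Hcover]]]].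
  replace O with (fun p => exists N, rect_union (l N) p) at 1.
  2:{ apply pred_ext; intro p; split; auto.
      intros [N [AB [Hin [Hx Hy]]]]. destruct p; eapply HlO; eauto. }
  apply (measure_chain_union_le _ dF P' (proj1 hP')); auto.
  - intro N; apply borel_rect_union; apply Hl.
  - intro N. eapply Rle_trans;
      [apply rect_union_transport; [apply Hl | apply Hl | exact Ha | exact Hb]|].
    do 2 apply Rplus_le_compat_r. apply (measure_mono _ dF P (proj1 hP)).
    + apply borel_rect_union; [rewrite map_fst_thicken | rewrite map_snd_thicken];
        apply Forall_borel_nbhd; auto.
    + apply nbhd_borel, dprod_metric; auto.
    + apply thicken_sub_nbhd; auto. intros AB x y Hin; apply (HlO N); auto.
Qed.

Lemma prok_adm_product a b rho : separable dX -> separable dY ->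
  prok_adm dX lam mu mu' a -> prok_adm dY lam nu nu' b -> Rmax (a + b) (2 * F a b) < rho ->
  prok_adm dF lam P P' rho.
Proof.
  intros sX sY Ha Hb Hrho.
  pose proof (Rmax_l (a + b) (2 * F a b)). pose proof (Rmax_r (a + b) (2 * F a b)).
  set (M := Rmax (a + b) (2 * F a b)) in *. set (s := (rho - M) / 2).
  pose proof (proj1 Ha). pose proof (proj1 Hb). pose proof (dprod_metric F hF dX dY hX hY) as hdF.
  split; [lra|]. intros C HC.
  assert (HC_s : P' C <= P' (nbhd dF s C)).
  { apply (measure_mono _ dF P' (proj1 hP')); auto using nbhd_borel.
    intros p; apply nbhd_self; auto. unfold s; lra. }
  assert (Hs_rho : P (nbhd dF (M + s) (nbhd dF s C)) <= P (nbhd dF rho C)).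
  { apply (measure_mono _ dF P (proj1 hP)); auto using nbhd_borel.
    intros q Hq. replace rho with (M + s + s) by (unfold s; field). apply nbhd_nbhd; auto. }
  pose proof (open_transport a b (M + s) (nbhd dF s C) sX sY Ha Hb ltac:(unfold s; lra)
                (nbhd_open _ _ hdF s C)).
  assert (lam * a + lam * b <= lam * rho)
    by (rewrite <- Rmult_plus_distr_l; apply Rmult_le_compat_l; lra).
  lra.
Qed.

Lemma prok_adm_near_max p1 p2 g : separable dX -> separable dY ->
  is_inf (prok_adm dX lam mu mu') p1 -> is_inf (prok_adm dY lam nu nu') p2 -> 0 < g ->
  prok_adm dF lam P P' (Rmax (p1 + p2) (2 * F p1 p2) + g).
Proof.
  intros sX sY S1 S2 Hg.
  assert (Hp1 : 0 <= p1) by (apply (proj2 S1); intros x [Hx _]; lra).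
  assert (Hp2 : 0 <= p2) by (apply (proj2 S2); intros x [Hx _]; lra).
  destruct (proj1 (proj2 hF) p1 p2 Hp1 Hp2 (g / 4)) as [delta [Hdelta Hcont]]; [lra|].
  pose proof (Rmin_l delta (g / 4)). pose proof (Rmin_r delta (g / 4)).
  assert (Heta : 0 < Rmin delta (g / 4)) by (apply Rmin_pos; lra).
  destruct (is_inf_approx _ _ _ S1 Heta) as [a [Ha [Ha1 Ha2]]].
  destruct (is_inf_approx _ _ _ S2 Heta) as [b [Hb [Hb1 Hb2]]].
  assert (Hab : Rabs (F a b - F p1 p2) < g / 4)
    by (apply Hcont; try lra; apply Rabs_def1; lra).
  apply Rabs_def2 in Hab.
  pose proof (Rmax_l (p1 + p2) (2 * F p1 p2)). pose proof (Rmax_r (p1 + p2) (2 * F p1 p2)).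
  apply (prok_adm_product a b); auto. apply Rmax_lub_lt; lra.
Qed.

End Transport.
End ProductSpace.

Theorem mainTheorem15
  (X : Type) (dX : X -> X -> R) (Y : Type) (dY : Y -> Y -> R)
  (hX : is_metric dX) (sX : separable dX)
  (hY : is_metric dY) (sY : separable dY)
  (mu mu' : (X -> Prop) -> R) (nu nu' : (Y -> Prop) -> R)
  (hmu : borel_prob dX mu) (hmu' : borel_prob dX mu')
  (hnu : borel_prob dY nu) (hnu' : borel_prob dY nu')
  (F : R -> R -> R) (hF : F2 F)
  (P P' : (X * Y -> Prop) -> R)
  (hP : is_product_measure dX dY (dprod F dX dY) mu nu P)
  (hP' : is_product_measure dX dY (dprod F dX dY) mu' nu' P')
  (lam : R) (hlam : 0 < lam) :
  prokhorov (dprod F dX dY) lam P P' <=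
  Rmax (prokhorov dX lam mu mu' + prokhorov dY lam nu nu')
       (2 * F (prokhorov dX lam mu mu') (prokhorov dY lam nu nu')).
Proof.
  apply Rle_plus_epsilon; intros g Hg.
  apply (prokhorov_is_inf (dprod F dX dY) lam P P' (dprod_metric F hF dX dY hX hY) hlam
           (proj1 hP) (proj1 hP')).
  apply (prok_adm_near_max X Y dX dY F hF hX hY mu mu' nu nu' P P' hmu hmu' hnu hP hP' lam hlam);
    auto using prokhorov_is_inf.
Qed.
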